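(* Let $n\ge1$. For every homogeneous polynomial $w\in\mathbb{Z}\langle\mathbf{a},\mathbf{b}\rangle$ of degree $n-1$, $$\Theta(w)=(1-q)^n\cdot[n]!\cdot \mathrm{ps}^*(\gamma(w)).$$ Consequently, for every graded poset $P$ of rank $n$, $$\Theta(\Psi(P))=(1-q)^n\cdot[n]!\cdot\mathrm{ps}^*(F(P)).$$
   Context: $\mathbf{a},\mathbf{b}$ are non-commuting variables. The Major MacMahon map $\Theta:\mathbb{Z}\langle\mathbf{a},\mathbf{b}\rangle\to\mathbb{Z}[q]$ is linear with $\Theta(u_1\cdots u_m)=\prod_{i:\,u_i=\mathbf{b}}q^i$ on monomials. $[m]=1+q+\cdots+q^{m-1}$, $[m]!=[m]\cdots[1]$. $\mathrm{QSym}$ is the algebra of quasi-symmetric functions in variables $t_1,t_2,\dots$, with monomial basis $M_\alpha=\sum_{i_1<\cdots<i_k}t_{i_1}^{\alpha_1}\cdots t_{i_k}^{\alpha_k}$ for compositions $\alpha=(\alpha_1,\dots,\alpha_k)$. For a composition $\alpha$ of $n$, let $v_\alpha=(\mathbf{a}-\mathbf{b})^{\alpha_1-1}\mathbf{b}(\mathbf{a}-\mathbf{b})^{\alpha_2-1}\mathbf{b}\cdots\mathbf{b}(\mathbf{a}-\mathbf{b})^{\alpha_k-1}$ (degree $n-1$); $\gamma:\mathbb{Z}\langle\mathbf{a},\mathbf{b}\rangle\to\mathrm{QSym}$ is the linear map with $\gamma(v_\alpha)=M_\alpha$. The stable principal specialization is $\mathrm{ps}(f)=f(1,q,q^2,\dots)\in\mathbb{Z}[[q]]$.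 The reversal $\alpha^*=(\alpha_k,\dots,\alpha_1)$ induces the linear map $f\mapsto f^*$ on $\mathrm{QSym}$ with $M_\alpha^*=M_{\alpha^*}$, and $\mathrm{ps}^*(f)=\mathrm{ps}(f^* )$. For a graded poset $P$ of rank $m+1$ with minimum $\hat0$, maximum $\hat1$, rank function $\rho$, the $\mathbf{a}\mathbf{b}$-index is $\Psi(P)=\sum_{S\subseteq\{1,\dots,m\}} f_S\, v_S$, where for $S=\{s_1<\cdots<s_k\}$, $f_S$ counts chains $\hat0<x_1<\cdots<x_k<\hat1$ with $\rho(x_i)=s_i$ and $v_S=v_1\cdots v_m$ with $v_i=\mathbf{b}$ if $i\in S$, $v_i=\mathbf{a}-\mathbf{b}$ otherwise. The quasi-symmetric function of $P$ is $F(P)=\gamma(\Psi(P))$; equivalently $F(P)=\lim_{k\to\infty}\sum_{\hat0=x_0\le x_1\le\cdots\le x_k=\hat1}t_1^{\rho(x_1)-\rho(x_0)}\cdots t_k^{\rho(x_k)-\rho(x_{k-1})}$. *)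

From HB Require Import structures.
From mathcomp Require Import all_boot all_order all_algebra.
Set Implicit Arguments. Unset Strict Implicit. Unset Printing Implicit Defensive.
Import Order.TTheory GRing.Theory Num.Theory.
Local Open Scope ring_scope.

(* Non-commutative series/polynomials in a, b over Z, as coefficient      *)
(* functions on words (seq bool); letter false = a, letter true = b.      *)
Definition ncs := seq bool -> int.

Definition ncadd (f g : ncs) : ncs := fun u => f u + g u.
Definition ncsub (f g : ncs) : ncs := fun u => f u - g u.
Definition ncmul (f g : ncs) : ncs :=
  fun u => \sum_(i < (size u).+1) f (take i u) * g (drop i u).
Definition ncone : ncs := fun u => (u == [::])%:R.
Definition nca : ncs := fun u => (u == [:: false])%:R.
Definition ncb : ncs := fun u => (u == [:: true])%:R.
Definition ncamb : ncs := ncsub nca ncb.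
Definition ncpow (f : ncs) (k : nat) : ncs := iter k (ncmul f) ncone.

(* homogeneous of degree d (hence a polynomial: finitely many words) *)
Definition homog (d : nat) (f : ncs) : Prop := forall u, f u != 0 -> size u = d.

Definition is_comp (n : nat) (al : seq nat) : bool :=
  all (fun x => 0 < x)%N al && (sumn al == n).

Fixpoint vcomp (al : seq nat) : ncs :=
  match al with
  | [::] => ncone
  | [:: x] => ncpow ncamb x.-1
  | x :: rest => ncmul (ncpow ncamb x.-1) (ncmul ncb (vcomp rest))
  end.

(* Major MacMahon map on homogeneous elements of degree d:
   word u_1..u_d |-> q^(sum of positions i (1-based) with u_i = b) *)
Definition Theta (d : nat) (w : ncs) : {poly int} :=
  \sum_(u : d.-tuple bool) w u *: 'X^(\sum_(i < d | tnth u i) i.+1).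

(* Quasi-symmetric functions, represented by their coordinates in the     *)
(* monomial basis M_alpha (alpha a composition, i.e. a seq nat).          *)
Definition qsym := seq nat -> int.
Definition Mbasis (al : seq nat) : qsym := fun be => (be == al)%:R.

(* coefficient of q^m in ps(M_be) = M_be(1,q,q^2,...):
   number of 0 <= e_1 < ... < e_k with sum_j be_j * e_j = m *)
Definition pscoef (be : seq nat) (m : nat) : nat :=
  #|[set t : (size be).-tuple 'I_m.+1 |
      sorted ltn (map val t) &&
      ((\sum_(j < size be) nth 0%N be j * val (tnth t j))%N == m)]|.

(* formal power series in q over Z: coefficient functions nat -> int *)
(* ps^*(f) for f homogeneous of degree n (supported on compositions of n):
   ps^*(f) = sum_alpha f_alpha ps(M_{alpha^*}) *)
Definition psstar (n : nat) (f : qsym) : nat -> int :=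
  fun m => \sum_(k < n.+1) \sum_(t : k.-tuple 'I_n.+1 | is_comp n (map val t))
             f (map val t) * (pscoef (rev (map val t)) m)%:R.

Definition pmul (p : {poly int}) (s : nat -> int) : nat -> int :=
  fun m => \sum_(i < m.+1) p`_i * s (m - i)%N.

Definition qfact (n : nat) : {poly int} := \prod_(i < n) \sum_(j < i.+1) 'X^j.

Definition graded_rank (disp : Order.disp_t) (T : finPOrderType disp)
  (z o : T) (rho : T -> nat) (n : nat) : Prop :=
  [/\ forall x : T, (z <= x)%O && (x <= o)%O,
      rho z = 0%N, rho o = n &
      forall x y : T, (x < y)%O -> (forall t : T, ~~ ((x < t)%O && (t < y)%O)) ->
        rho y = (rho x).+1].

(* f_S for S subset of {1..m}, encoded as S : {set 'I_m} (i <-> i+1) *)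
Definition flagf (disp : Order.disp_t) (T : finPOrderType disp)
  (z o : T) (rho : T -> nat) (m : nat) (S : {set 'I_m}) : nat :=
  #|[set t : #|S|.-tuple T |
      path (fun x y => (x < y)%O) z t && (last z t < o)%O &&
      (map rho t == [seq (val i).+1 | i <- enum S])]|.

Definition vset (m : nat) (S : {set 'I_m}) : ncs :=
  foldr (fun i acc => ncmul (if i \in S then ncb else ncamb) acc) ncone (enum 'I_m).

(* ab-index of a poset of rank m+1 *)
Definition abindex (disp : Order.disp_t) (T : finPOrderType disp)
  (z o : T) (rho : T -> nat) (m : nat) : ncs :=
  fun u => \sum_(S : {set 'I_m}) (flagf z o rho S)%:R * vset S u.

From HB Require Import structures.
From mathcomp Require Import all_boot all_order all_algebra.
From mathcomp Require Import zify ring.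
From Stdlib Require Import FunctionalExtensionality.
Set Implicit Arguments. Unset Strict Implicit. Unset Printing Implicit Defensive.
Import Order.TTheory GRing.Theory Num.Theory.
Local Open Scope ring_scope.

(* Both sides are Z-linear in [w], so it suffices to compare them on the basis
   of words [v_s] in the letters a - b and b (s a word in {a,b} of length n - 1):
   since a = (a - b) + b letterwise, a monomial word [t] is the sum of the [v_s]
   over the [s] obtained from [t] by turning some a's into b's, and [v_s] is the
   [v_al] of a composition [al] of n whose parts are closed by the b's of [s].
   On such a word, Theta(v_s) = prod_(s_i = a) (1 - q^i) * prod_(s_i = b) q^i.
   On the other side, writing t_j = be_j + ... + be_k for the tail sums of [be],
   ps(M_be) = q^(t_2 + ... + t_k) / prod_j (1 - q^(t_j)); for [be = al^*] the tail
   sums are n and the positions of the b's in [s], and (1 - q)^n [n]! is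
   prod_(i <= n) (1 - q^i), so the factors 1 - q^i at the b's and at n cancel.
   The statement about posets follows because the ab-index is homogeneous. *)

Lemma big_tuple_cons (T : finType) (R : nmodType) k (G : k.+1.-tuple T -> R) :
  \sum_(t : k.+1.-tuple T) G t = \sum_(x : T) \sum_(t : k.-tuple T) G [tuple of x :: t].
Proof.
rewrite pair_big /= (reindex (fun p : T * k.-tuple T => [tuple of p.1 :: p.2])) //=.
exists (fun t : k.+1.-tuple T => (thead t, [tuple of behead t])).
  by move=> [x t] _; congr (_, _); apply: val_inj.
by move=> t _; rewrite -tuple_eta.
Qed.

Lemma big_tuple_prod (T : finType) (R : comNzRingType) d (F : 'I_d -> T -> R) :
  \sum_(t : d.-tuple T) \prod_(i < d) F i (tnth t i) = \prod_(i < d) \sum_(x : T) F i x.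
Proof.
elim: d F => [|d IH] F.
  rewrite big_ord0 (big_pred1 [tuple]) ?big_ord0 // => t.
  by apply/esym/eqP; rewrite [t]tuple0.
rewrite big_tuple_cons big_ord_recl mulr_suml; apply: eq_bigr => x _.
rewrite -(IH (fun i => F (lift ord0 i))) mulr_sumr; apply: eq_bigr => t _.
by rewrite big_ord_recl tnth0; congr (_ * _); apply: eq_bigr => i _; rewrite tnthS.
Qed.

(** * Products of linear forms in the letters *)

(* A linear form [l] in the letters a, b is given by its values [l false] on a
   and [l true] on b; [lprod [:: l_1; ...; l_d]] is the product l_1 ... l_d. *)
Fixpoint lprod (L : seq (bool -> int)) : ncs :=
  fun u => match L, u with
  | [::], [::] => 1
  | l :: L', x :: u' => l x * lprod L' u'
  | _, _ => 0
  end.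

Definition lf_b : bool -> int := fun x => if x then 1 else 0.
Definition lf_amb : bool -> int := fun x => if x then -1 else 1.

Lemma lprod_size_neq L u : size u != size L -> lprod L u = 0.
Proof. by elim: L u => [|l L IH] [|x u] //= H; rewrite IH ?mulr0. Qed.

Lemma homog_lprod L : homog (size L) (lprod L).
Proof. by move=> u; apply: contraNeq => /lprod_size_neq ->. Qed.

Lemma lprod_cat L1 L2 u :
  lprod (L1 ++ L2) u = lprod L1 (take (size L1) u) * lprod L2 (drop (size L1) u).
Proof.
elim: L1 u => [|l L1 IH] u; first by rewrite take0 drop0 /= mul1r.
by case: u => [|x u] /=; rewrite ?mul0r // IH mulrA.
Qed.

Lemma ncmul_lprod L1 L2 : ncmul (lprod L1) (lprod L2) =1 lprod (L1 ++ L2).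
Proof.
move=> u; rewrite /ncmul; case: (leqP (size L1) (size u)) => HL1.
  rewrite (bigD1 (Ordinal (HL1 : size L1 < (size u).+1)%N)) //= big1 ?addr0.
    by rewrite lprod_cat.
  move=> i Hi; rewrite lprod_size_neq ?mul0r // size_take.
  have Hi' : nat_of_ord i != size L1 by apply: contra Hi => /eqP Hi; apply/eqP/val_inj.
  by case: ifP => Hc; have := ltn_ord i; lia.
rewrite lprod_size_neq ?size_cat; last by lia.
by rewrite big1 // => i _; rewrite lprod_size_neq ?mul0r // size_take; case: ifP; lia.
Qed.

Lemma ncmul_eq f f' g g' : f =1 f' -> g =1 g' -> ncmul f g =1 ncmul f' g'.
Proof. by move=> Hf Hg u; apply: eq_bigr => i _; rewrite Hf Hg. Qed.

Lemma ncone_lprod : ncone =1 lprod [::].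
Proof. by case. Qed.

Lemma ncb_lprod : ncb =1 lprod [:: lf_b].
Proof. by case=> [|[] [|y u]]. Qed.

Lemma ncamb_lprod : ncamb =1 lprod [:: lf_amb].
Proof. by case=> [|[] [|y u]]. Qed.

Lemma ncpow_amb_lprod k : ncpow ncamb k =1 lprod (nseq k lf_amb).
Proof.
elim: k => [|k IH] u /=; first exact: ncone_lprod.
by rewrite (ncmul_eq ncamb_lprod IH) ncmul_lprod.
Qed.

Fixpoint vcomp_forms (al : seq nat) : seq (bool -> int) :=
  match al with
  | [::] => [::]
  | [:: x] => nseq x.-1 lf_amb
  | x :: rest => nseq x.-1 lf_amb ++ lf_b :: vcomp_forms rest
  end.

Lemma vcomp_lprod al : vcomp al =1 lprod (vcomp_forms al).
Proof.
elim: al => [|x [|y r] IH] u; [exact: ncone_lprod | exact: ncpow_amb_lprod |].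
rewrite /= (ncmul_eq (ncpow_amb_lprod _) (ncmul_eq ncb_lprod IH)).
by rewrite (ncmul_eq (frefl _) (ncmul_lprod [:: lf_b] _)) ncmul_lprod.
Qed.

(** * The basis of words in the letters a - b and b *)

Definition vletter (x : bool) : bool -> int := if x then lf_b else lf_amb.
Definition vword (s : seq bool) : ncs := lprod (map vletter s).

Lemma homog_vword d (s : d.-tuple bool) : homog d (vword s).
Proof.
by move=> u; apply: contraNeq => ud; apply/eqP/lprod_size_neq; rewrite size_map size_tuple.
Qed.

Definition incr_head (al : seq nat) : seq nat :=
  if al is x :: r then x.+1 :: r else [:: 1%N].

(* Each letter b of [s] closes a part of the composition. *)
Fixpoint comp_of (s : seq bool) : seq nat :=
  match s with
  | [::] => [:: 1%N]
  | b :: s' => if b then 1%N :: comp_of s' else incr_head (comp_of s')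
  end.

Lemma comp_ofE s : exists x r, comp_of s = x.+1 :: r.
Proof.
elim: s => [|b s [x [r IH]]] /=; first by exists 0%N, [::].
by case: b; rewrite IH; [exists 0%N, (x.+1 :: r) | exists x.+1, r].
Qed.

Lemma vcomp_forms_comp_of s : vcomp_forms (comp_of s) = map vletter s.
Proof.
elim: s => [|b s IH] //=; have [x [r E]] := comp_ofE s; move: IH; rewrite E.
by case: b => /= <-; case: r {E}.
Qed.

Lemma vcomp_comp_of s : vcomp (comp_of s) =1 vword s.
Proof. by move=> u; rewrite vcomp_lprod vcomp_forms_comp_of. Qed.

Lemma comp_of_pos s : all (fun x => 0 < x)%N (comp_of s).
Proof. by elim: s => [|b s] //=; have [x [r ->]] := comp_ofE s; case: b. Qed.

Lemma sumn_comp_of s : sumn (comp_of s) = (size s).+1.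
Proof.
elim: s => [|b s] //=; have [x [r ->]] := comp_ofE s.
by case: b => /= IH; lia.
Qed.

Lemma is_comp_comp_of s : is_comp (size s).+1 (comp_of s).
Proof. by rewrite /is_comp comp_of_pos sumn_comp_of eqxx. Qed.

Lemma lprod_map_tuple d (f : bool -> bool -> int) (s u : d.-tuple bool) :
  lprod (map f s) u = \prod_(i < d) f (tnth s i) (tnth u i).
Proof.
elim: d s u => [|d IH] s u; first by rewrite big_ord0 [s]tuple0 [u]tuple0.
case/tupleP: s => x s; case/tupleP: u => y u.
rewrite big_ord_recl /= IH !tnth0; congr (_ * _); apply: eq_bigr => i _.
by rewrite !tnthS.
Qed.

Definition onehot (y : bool) : bool -> int := fun x => (x == y)%:R.

Lemma lprod_onehot (t u : seq bool) : lprod (map onehot t) u = (u == t)%:R.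
Proof.
elim: t u => [|y t IH] [|x u] //=.
by rewrite IH eqseq_cons /onehot; case: (x == y); case: (u == t).
Qed.

Definition vcoef d (t s : d.-tuple bool) : int :=
  \prod_(i < d) (tnth t i ==> tnth s i)%:R.

Lemma lprod_onehot_vexpand d (t u : d.-tuple bool) :
  lprod (map onehot t) u = \sum_(s : d.-tuple bool) vcoef t s * vword s u.
Proof.
rewrite lprod_map_tuple; under [RHS]eq_bigr do rewrite /vword lprod_map_tuple -big_split.
rewrite (big_tuple_prod (fun i x => (tnth t i ==> x)%:R * vletter x (tnth u i))).
apply: eq_bigr => i _; rewrite big_bool /onehot.
by case: (tnth t i); case: (tnth u i).
Qed.

Lemma homog_vexpand d (w : ncs) : homog d w ->
  w =1 fun u => \sum_(s : d.-tuple bool) (\sum_(t : d.-tuple bool) w t * vcoef t s) * vword s u.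
Proof.
move=> Hw u; under eq_bigr do rewrite mulr_suml.
rewrite exchange_big /=.
transitivity (\sum_(t : d.-tuple bool) w t * (u == t :> seq bool)%:R).
  case: (boolP (size u == d)) => Hu.
    rewrite (bigD1 (Tuple Hu)) //= eqxx mulr1 big1 ?addr0 // => t Ht.
    by rewrite (_ : (_ == _) = false) ?mulr0 //; apply: contraNF Ht => /eqP Ht; apply/eqP/val_inj.
  rewrite big1 => [|t _]; first by apply/eqP; apply: contraR Hu => /Hw ->.
  by rewrite (_ : (_ == _) = false) ?mulr0 //; apply: contraNF Hu => /eqP ->; rewrite size_tuple.
apply: eq_bigr => t _.
case: (boolP (size u == d)) => Hu.
  rewrite -[u]/(val (Tuple Hu)) -lprod_onehot lprod_onehot_vexpand mulr_sumr.
  by apply: eq_bigr => s _; rewrite mulrA.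
rewrite (_ : (_ == _) = false); last by apply: contraNF Hu => /eqP ->; rewrite size_tuple.
by rewrite mulr0 big1 // => s _; rewrite /vword lprod_size_neq ?mulr0 // size_map size_tuple.
Qed.

Lemma Theta_sum d (I : finType) (c : I -> int) (F : I -> ncs) :
  Theta d (fun u => \sum_i c i * F i u) = \sum_i c i *: Theta d (F i).
Proof.
rewrite /Theta; under eq_bigr do rewrite scaler_suml.
rewrite exchange_big; apply: eq_bigr => i _.
by rewrite scaler_sumr; apply: eq_bigr => u _; rewrite scalerA.
Qed.

Lemma Theta_vword d (s : d.-tuple bool) :
  Theta d (vword s) = \prod_(i < d) (if tnth s i then 'X^(i.+1) else 1 - 'X^(i.+1)).
Proof.
rewrite /Theta; transitivity (\sum_(u : d.-tuple bool) \prod_(i < d)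
    (vletter (tnth s i) (tnth u i) *: (if tnth u i then 'X^(i.+1) else 1))).
  apply: eq_bigr => u _.
  by rewrite scaler_prod -prodrXr big_mkcond /= /vword lprod_map_tuple.
rewrite (big_tuple_prod (fun i x => vletter (tnth s i) x *: (if x then 'X^(i.+1) else 1))).
apply: eq_bigr => i _; rewrite big_bool.
by case: (tnth s i); rewrite /= ?scale1r ?scale0r ?scaleN1r ?addr0 // addrC.
Qed.

Lemma qfactE n : (1 - 'X) ^+ n * qfact n = \prod_(i < n) (1 - 'X^(i.+1)) :> {poly int}.
Proof.
rewrite -[n in _ ^+ n]card_ord -prodr_const /qfact -big_split /=.
by apply: eq_bigr => i _; rewrite -opprB mulNr -subrX1 opprB.
Qed.

(** * Stable principal specialization of monomial quasi-symmetric functions *)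

Section WeightedChains.
Local Open Scope nat_scope.

(* [cntM be lo m] counts the chains lo <= e_1 < ... < e_k with
   be_1 e_1 + ... + be_k e_k = m, where k = size be. *)
Fixpoint cntM (be : seq nat) (lo m : nat) : nat :=
  if be is x :: be' then \sum_(lo <= e < m.+1) (x * e <= m) * cntM be' e.+1 (m - x * e)
  else m == 0.

Lemma big_nat_vanish lo a b (F : nat -> nat) : a <= b -> (forall e, a <= e -> F e = 0) ->
  \sum_(lo <= e < b) F e = \sum_(lo <= e < a) F e.
Proof.
move=> Hab HF; case: (leqP lo a) => Hlo.
  rewrite (big_cat_nat Hlo Hab) /= [X in _ + X]big1_seq ?addn0 // => e.
  by rewrite mem_index_iota => /andP[_ /andP[He _]]; apply: HF.
rewrite [RHS]big_geq ?(ltnW Hlo) // big1_seq // => e.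
by rewrite mem_index_iota => /andP[_ /andP[He _]]; apply: HF; lia.
Qed.

(* Shifting every e_j by one adds [sumn be] to the weight. *)
Lemma cntM_shift be lo m : all (fun x => 0 < x) be ->
  cntM be lo.+1 m = (sumn be <= m) * cntM be lo (m - sumn be).
Proof.
elim: be lo m => [|x be IH] lo m /=; first by rewrite subn0 mul1n.
move=> /andP[Hx Hbe]; rewrite -addn1 big_addn (_ : m.+1 - 1 = m); last by lia.
have Hxe e : e <= x * e by rewrite leq_pmull.
case: (leqP (x + sumn be) m) => HT; last first.
  rewrite mul0n big1_seq // => e _; rewrite IH // mulnDr muln1.
  case: (leqP (x * e + x) m) => H1; last by rewrite mul0n.
  by case: (leqP (sumn be) (m - (x * e + x))) => H3; [lia | rewrite muln0].
rewrite mul1n (@big_nat_vanish lo (m - (x + sumn be)).+1 m); first last.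
- move=> e He; rewrite IH // mulnDr muln1.
  case: (leqP (x * e + x) m) => H1; last by rewrite mul0n.
  by case: (leqP (sumn be) (m - (x * e + x))) => H3; [have := Hxe e; lia | rewrite muln0].
- by lia.
apply: eq_big_nat => e He; rewrite IH // mulnDr muln1.
case: (leqP (x * e + x) m) => H1; case: (leqP (sumn be) (m - (x * e + x))) => H2;
  case: (leqP (x * e) (m - (x + sumn be))) => H3; rewrite ?mul0n ?muln0 ?mul1n //; try lia.
by congr (cntM _ _ _); lia.
Qed.

(* Split according to whether e_1 = 0 or e_1 >= 1. *)
Lemma cntM_cons x be j : 0 < x -> all (fun x => 0 < x) be ->
  cntM (x :: be) 0 j = (x + sumn be <= j) * cntM (x :: be) 0 (j - (x + sumn be))
                       + (sumn be <= j) * cntM be 0 (j - sumn be).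
Proof.
move=> Hx Hbe; have := @cntM_shift (x :: be) 0 j; rewrite /= Hx Hbe => /(_ isT) <-.
by rewrite big_ltn // muln0 subn0 mul1n cntM_shift // addnC.
Qed.

Definition wsum (be e : seq nat) : nat := \sum_(j < size be) nth 0 be j * nth 0 e j.

Lemma wsum_cons x be h e : wsum (x :: be) (h :: e) = x * h + wsum be e.
Proof. by rewrite /wsum /= big_ord_recl. Qed.

Lemma cntM_tuple be lo m M : all (fun x => 0 < x) be -> m < M ->
  \sum_(t : (size be).-tuple 'I_M) [&& all (leq lo) (map val t),
     sorted ltn (map val t) & wsum be (map val t) == m] = cntM be lo m.
Proof.
elim: be lo m => [|x be IH] lo m /=.
  move=> _ _; rewrite (big_pred1 [tuple]) => [|t]; last by apply/esym/eqP; rewrite [t]tuple0.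
  by rewrite /wsum big_ord0 /=; case: m.
move=> /andP[Hx Hbe] HmM; rewrite big_tuple_cons.
transitivity (\sum_(h < M) (lo <= h) * ((x * h <= m) * cntM be h.+1 (m - x * h))).
  apply: eq_bigr => h _; rewrite -IH //; last by lia.
  rewrite !big_distrr /=; apply: eq_bigr => t _.
  rewrite wsum_cons path_sortedE; last exact: ltn_trans.
  case: (leqP lo h) => Hlo /=; last by rewrite mul0n.
  case: (leqP (x * h) m) => Hxh /=; last first.
    by rewrite (_ : x * h + _ == m = false) ?andbF ?muln0 //; apply/eqP; lia.
  rewrite (_ : (x * h + wsum be (map val t) == m) = (wsum be (map val t) == m - x * h));
    last by apply/eqP/eqP; lia.
  case: (boolP (all (fun y => h < y) (map val t))) => Ha /=; last by rewrite andbF !muln0.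
  by rewrite (sub_all _ Ha) ?mul1n // => y /=; lia.
rewrite -(@big_nat_vanish lo m.+1 M) //; last first.
  move=> e He; have : e <= x * e by rewrite leq_pmull.
  by case: (leqP (x * e) m) => H1 H2 //; lia.
rewrite big_geq_mkord [RHS]big_mkcond /=; apply: eq_bigr => i _.
by case: leqP => _; rewrite ?mul1n ?mul0n.
Qed.

Lemma pscoefE be m : all (fun x => 0 < x) be -> pscoef be m = cntM be 0 m.
Proof.
move=> Hbe; rewrite -(@cntM_tuple be 0 m m.+1) // /pscoef -sum1_card big_mkcond /=.
apply: eq_bigr => t _; rewrite inE (_ : all (leq 0) _); last by apply/allP.
rewrite (_ : \sum_(j < size be) _ = wsum be (map val t)) //.
apply: eq_bigr => j _; congr (_ * _).
by rewrite (nth_map (tnth t j)) ?size_tuple // -tnth_nth.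
Qed.

End WeightedChains.

Lemma pmul_trunc (p : {poly int}) s N j : (j <= N)%N ->
  pmul p s j = (p * \poly_(i < N.+1) s i)`_j.
Proof.
move=> jN; rewrite coefM /pmul; apply: eq_bigr => i _.
by rewrite coef_poly ifT //; have := ltn_ord i; lia.
Qed.

Lemma coefM_eq_prefix (p A B : {poly int}) N :
  (forall j, (j <= N)%N -> A`_j = B`_j) -> forall j, (j <= N)%N -> (p * A)`_j = (p * B)`_j.
Proof.
move=> AB j jN; rewrite !coefM; apply: eq_bigr => i _.
by rewrite AB //; have := ltn_ord i; lia.
Qed.

Lemma pmulM (p q : {poly int}) s j : pmul (p * q) s j = pmul p (pmul q s) j.
Proof.
rewrite (pmul_trunc _ _ (leqnn j)) (pmul_trunc _ _ (leqnn j)) -mulrA.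
by apply: coefM_eq_prefix (leqnn j) => i ij; rewrite coef_poly ltnS ij (pmul_trunc _ _ ij).
Qed.

Lemma pmul_eq (p : {poly int}) (s s' : nat -> int) : s =1 s' -> pmul p s =1 pmul p s'.
Proof. by move=> ss' j; apply: eq_bigr => i _; rewrite ss'. Qed.

Lemma pmul_coef (p q : {poly int}) j : pmul p (fun i => q`_i) j = (p * q)`_j.
Proof. by rewrite coefM. Qed.

Lemma pmul_Xn k (s : nat -> int) j : pmul 'X^k s j = (k <= j)%N%:R * s (j - k)%N.
Proof.
rewrite (pmul_trunc _ _ (leqnn j)) coefXnM coef_poly.
by case: ltnP => kj; rewrite ?mul0r ?mul1r // ifT //; lia.
Qed.

Lemma pmul_1subXn k (s : nat -> int) j : pmul (1 - 'X^k) s j = s j - (k <= j)%N%:R * s (j - k)%N.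
Proof.
rewrite -pmul_Xn !(pmul_trunc _ _ (leqnn j)) mulrBl mul1r coefB coef_poly.
by rewrite ltnSn.
Qed.

Definition psM (be : seq nat) : nat -> int := fun m => (pscoef be m)%:R.

Lemma psM_cons x be j : (0 < x)%N -> all (fun x => 0 < x)%N be ->
  psM (x :: be) j - (x + sumn be <= j)%N%:R * psM (x :: be) (j - (x + sumn be))%N
  = (sumn be <= j)%N%:R * psM be (j - sumn be)%N.
Proof.
move=> x0 be0; have xbe0 : all (fun x => 0 < x)%N (x :: be) by rewrite /= x0.
by rewrite /psM !pscoefE // cntM_cons // natrD !natrM addrAC subrr add0r.
Qed.

Fixpoint tail_sums (be : seq nat) : seq nat :=
  if be is x :: r then sumn be :: tail_sums r else [::].

Definition tail_prod (be : seq nat) : {poly int} := \prod_(t <- tail_sums be) (1 - 'X^t).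
Definition tail_exp (be : seq nat) : nat := sumn (behead (tail_sums be)).

Lemma psM_tail_prod be : all (fun x => 0 < x)%N be ->
  forall j, pmul (tail_prod be) (psM be) j = ('X^(tail_exp be))`_j.
Proof.
elim: be => [|x be IH] /=.
  move=> _ j; rewrite /tail_prod big_nil (pmul_trunc _ _ (leqnn j)) mul1r coef_poly.
  by rewrite ltnSn /psM pscoefE // coefXn.
move=> /andP[x0 be0] j.
(* (1 - q^(t_1)) ps(M_(x :: be)) = q^(t_2) ps(M_be), with t_j the tail sums *)
rewrite /tail_prod big_cons -/(tail_prod be) mulrC pmulM.
rewrite (pmul_eq _ (fun i => pmul_1subXn _ _ i)) (pmul_eq _ (fun i => psM_cons i x0 be0)).
rewrite (pmul_eq _ (fun i => esym (pmul_Xn _ _ i))) -pmulM mulrC pmulM.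
rewrite (pmul_eq _ (IH be0)) pmul_coef -exprD.
by case: be {IH be0} => [|y be].
Qed.

Fixpoint prefix_sums (al : seq nat) : seq nat :=
  if al is x :: r then x :: map (addn x) (prefix_sums r) else [::].

Lemma tail_sums_rcons r x : tail_sums (rcons r x) = rcons (map (addn x) (tail_sums r)) x.
Proof.
elim: r => [|y r IH] /=; first by rewrite addn0.
by rewrite IH sumn_rcons; congr (_ :: _); lia.
Qed.

Lemma tail_sums_rev al : tail_sums (rev al) = rev (prefix_sums al).
Proof.
elim: al => [|x al IH] //=.
by rewrite rev_cons tail_sums_rcons IH rev_cons map_rev.
Qed.

Definition bpos (s : seq bool) : seq nat :=
  [seq i.+1 | i <- iota 0 (size s) & nth false s i].

Lemma bpos_cons x s :
  bpos (x :: s) = if x then 1%N :: map succn (bpos s) else map succn (bpos s).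
Proof.
rewrite /bpos /= -add1n iotaDl filter_map.
rewrite (_ : [seq y <- _ | preim _ _ y] = [seq y <- iota 0 (size s) | nth false s y]) //.
by case: x; rewrite /= -map_comp.
Qed.

Lemma prefix_sums_comp_of s : prefix_sums (comp_of s) = rcons (bpos s) (size s).+1.
Proof.
elim: s => [|x s IH] //=; rewrite bpos_cons.
have [y [r E]] := comp_ofE s; move: IH; rewrite E => /= IH.
case: x => /=; rewrite -(map_rcons succn (bpos s) (size s).+1) -IH /= -!map_comp.
  by congr (_ :: _ :: _); apply: eq_map => z /=; lia.
by congr (_ :: _); apply: eq_map => z /=; lia.
Qed.

Lemma big_bpos (R : Type) (idx : R) (op : Monoid.law idx) d (s : d.-tuple bool)
    (F : nat -> R) :
  \big[op/idx]_(t <- bpos s) F t = \big[op/idx]_(i < d | tnth s i) F i.+1.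
Proof.
rewrite /bpos big_map big_filter size_tuple.
rewrite (_ : iota 0 d = index_iota 0 d) ?big_mkord; last by rewrite /index_iota subn0.
by apply: eq_bigl => i; rewrite (tnth_nth false).
Qed.

Lemma Theta_vword_ps d (s : d.-tuple bool) m :
  (Theta d (vword s))`_m
  = pmul ((1 - 'X) ^+ d.+1 * qfact d.+1) (psM (rev (comp_of s))) m.
Proof.
set be := rev (comp_of s).
have be0 : all (fun x => 0 < x)%N be by rewrite all_rev comp_of_pos.
have tail_sumsE : tail_sums be = d.+1 :: rev (bpos s).
  by rewrite tail_sums_rev prefix_sums_comp_of rev_rcons size_tuple.
set Q := \prod_(i < d | ~~ tnth s i) (1 - 'X^(i.+1) : {poly int}).
have factE : (1 - 'X) ^+ d.+1 * qfact d.+1 = Q * tail_prod be.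
  rewrite qfactE /tail_prod tail_sumsE big_cons big_rev big_bpos big_ord_recr /=.
  by rewrite (bigID (fun i => tnth s i)) /= -/Q; ring.
have ThetaE : Theta d (vword s) = Q * 'X^(tail_exp be).
  rewrite Theta_vword /tail_exp tail_sumsE /= sumn_rev sumnE big_bpos -prodrXr.
  rewrite (bigID (fun i => tnth s i)) /= mulrC; congr (_ * _).
    by apply: eq_bigr => i /negbTE ->.
  by apply: eq_bigr => i ->.
by rewrite factE pmulM (pmul_eq _ (psM_tail_prod be0)) pmul_coef ThetaE.
Qed.

Lemma pmul_sum (I : finType) (p : {poly int}) (c : I -> int) (F : I -> nat -> int) j :
  pmul p (fun m => \sum_i c i * F i m) j = \sum_i c i * pmul p (F i) j.
Proof.
rewrite /pmul; under eq_bigr do rewrite mulr_sumr.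
rewrite exchange_big; apply: eq_bigr => i _.
by rewrite mulr_sumr; apply: eq_bigr => k _; rewrite mulrCA.
Qed.

Lemma leq_sumn_mem (x : nat) s : x \in s -> (x <= sumn s)%N.
Proof. by elim: s => [|y s IH] //=; rewrite inE => /orP[/eqP -> | /IH]; lia. Qed.

Lemma size_leq_sumn s : all (fun x => 0 < x)%N s -> (size s <= sumn s)%N.
Proof. by elim: s => [|y s IH] //= /andP[Hy /IH]; lia. Qed.

Lemma psstar_sum_pick n al (F : seq nat -> int) : is_comp n al ->
  \sum_(k < n.+1) \sum_(t : k.-tuple 'I_n.+1 | is_comp n (map val t))
     (map val t == al)%:R * F (map val t) = F al.
Proof.
move=> /andP[al0 /eqP alE].
have al_lt : (size al < n.+1)%N by have := size_leq_sumn al0; lia.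
rewrite (bigD1 (Ordinal al_lt)) //= [X in _ + X]big1 ?addr0; last first.
  move=> k kal; apply: big1 => t _; rewrite (_ : _ == al = false) ?mul0r //.
  apply: contraNF kal => /eqP tal; apply/eqP/val_inj => /=.
  by rewrite -tal size_map size_tuple.
pose t0 := map_tuple (@inord n) (in_tuple al).
have t0E : map val t0 = al.
  rewrite /= -map_comp map_id_in // => x xal /=; rewrite inordK //.
  by have := leq_sumn_mem xal; lia.
rewrite (bigD1 t0) /=; last by rewrite t0E /is_comp al0 alE eqxx.
rewrite big1 ?addr0 ?t0E ?eqxx ?mul1r // => t /andP[_ tt0].
rewrite (_ : _ == al = false) ?mul0r //; apply: contraNF tt0 => /eqP tal.
by apply/eqP/val_inj/(inj_map val_inj); rewrite tal t0E.
Qed.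

Lemma psstar_sum n (I : finType) (c : I -> int) (al : I -> seq nat) (f : qsym) m :
  (forall i, is_comp n (al i)) ->
  (forall be, f be = \sum_i c i * (be == al i)%:R) ->
  psstar n f m = \sum_i c i * psM (rev (al i)) m.
Proof.
move=> al_comp fE; rewrite /psstar.
under eq_bigr do under eq_bigr do rewrite fE mulr_suml.
under eq_bigr do rewrite exchange_big.
rewrite exchange_big; apply: eq_bigr => i _.
rewrite -(psstar_sum_pick (fun s => c i * psM (rev s) m) (al_comp i)).
by apply: eq_bigr => k _; apply: eq_bigr => t _; rewrite mulrAC mulrC.
Qed.

Lemma homog_zero d : homog d (fun=> 0).
Proof. by move=> u; rewrite eqxx. Qed.

Lemma homog_scale d c f : homog d f -> homog d (fun u => c * f u).
Proof. by move=> Hf u cfu; apply: Hf; apply: contraNneq cfu => ->; rewrite mulr0. Qed.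

Lemma homog_sum d (I : Type) (r : seq I) (P : pred I) (F : I -> ncs) :
  (forall i, homog d (F i)) -> homog d (fun u => \sum_(i <- r | P i) F i u).
Proof.
move=> HF u; apply: contraNeq => ud; rewrite big1 // => i _.
by apply: (contraNeq _ ud) => /HF ->.
Qed.

Section GammaLinear.
Variables (d : nat) (gamma : ncs -> qsym).
Hypothesis gammaD : forall f g, homog d f -> homog d g ->
  forall be, gamma (ncadd f g) be = gamma f be + gamma g be.

Lemma gamma0 be : gamma (fun=> 0) be = 0.
Proof.
have := gammaD (homog_zero d) (homog_zero d) be.
rewrite (_ : ncadd _ _ = fun=> 0); last by apply: functional_extensionality => u; rewrite /ncadd addr0.
by move/eqP; rewrite -subr_eq subrr eq_sym => /eqP.
Qed.

Lemma gammaN f be : homog d f -> gamma (fun u => - f u) be = - gamma f be.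
Proof.
move=> Hf; have := gammaD Hf (homog_scale (c := -1) Hf) be.
rewrite (_ : ncadd _ _ = fun=> 0); last first.
  by apply: functional_extensionality => u; rewrite /ncadd mulN1r subrr.
rewrite gamma0 => /eqP; rewrite eq_sym addr_eq0 => /eqP ->; rewrite opprK.
by congr (gamma _ _); apply: functional_extensionality => u; rewrite mulN1r.
Qed.

Lemma gammaMn f k be : homog d f -> gamma (fun u => k%:Z * f u) be = k%:Z * gamma f be.
Proof.
move=> Hf; elim: k => [|k IH].
  rewrite mul0r -(gamma0 be); congr (gamma _ _).
  by apply: functional_extensionality => u; rewrite mul0r.
have -> : (fun u => k.+1%:Z * f u) = ncadd f (fun u => k%:Z * f u).
  by apply: functional_extensionality => u; rewrite /ncadd intS mulrDl mul1r.
by rewrite gammaD ?IH ?intS ?mulrDl ?mul1r //; apply: homog_scale.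
Qed.

Lemma gammaZ c f be : homog d f -> gamma (fun u => c * f u) be = c * gamma f be.
Proof.
case: c => k Hf; first exact: gammaMn.
rewrite NegzE mulNr -gammaMn // -gammaN; last exact: homog_scale.
by congr (gamma _ _); apply: functional_extensionality => u; rewrite mulNr.
Qed.

Lemma gamma_sum (I : Type) (r : seq I) (c : I -> int) (F : I -> ncs) be :
  (forall i, homog d (F i)) ->
  gamma (fun u => \sum_(i <- r) c i * F i u) be = \sum_(i <- r) c i * gamma (F i) be.
Proof.
move=> HF; elim: r => [|i r IH].
  by rewrite big_nil -[RHS](gamma0 be) unlock.
rewrite big_cons -IH -gammaZ // -gammaD; first last.
- by apply: homog_sum => j; apply: homog_scale.
- exact: homog_scale.
by congr (gamma _ _); apply: functional_extensionality => u; rewrite /ncadd big_cons.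
Qed.

Hypothesis gamma_vcomp :
  forall al, is_comp d.+1 al -> forall be, gamma (vcomp al) be = Mbasis al be.

Lemma Theta_psstar w : homog d w ->
  forall m, (Theta d w)`_m = pmul ((1 - 'X) ^+ d.+1 * qfact d.+1) (psstar d.+1 (gamma w)) m.
Proof.
move=> Hw m; pose c (s : d.-tuple bool) := \sum_(t : d.-tuple bool) w t * vcoef t s.
have wE : w = fun u => \sum_s c s * vword s u.
  exact: functional_extensionality (homog_vexpand Hw).
have comp_s (s : d.-tuple bool) : is_comp d.+1 (comp_of s).
  by have := is_comp_comp_of s; rewrite size_tuple.
have gammaE be : gamma w be = \sum_s c s * (be == comp_of s)%:R.
  rewrite wE gamma_sum => [|s]; last exact: homog_vword.
  apply: eq_bigr => s _.
  rewrite -(functional_extensionality _ _ (vcomp_comp_of s)) gamma_vcomp //.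
rewrite (pmul_eq _ (fun j => psstar_sum j comp_s gammaE)) pmul_sum.
rewrite {1}wE Theta_sum coef_sum.
by apply: eq_bigr => s _; rewrite coefZ Theta_vword_ps.
Qed.

End GammaLinear.

Lemma vset_lprod m (S : {set 'I_m}) : vset S =1 lprod [seq vletter (i \in S) | i <- enum 'I_m].
Proof.
rewrite /vset; elim: (enum 'I_m) => [|i r IH] u /=; first exact: ncone_lprod.
have iS : (if i \in S then ncb else ncamb) =1 lprod [:: vletter (i \in S)].
  by case: (i \in S); [exact: ncb_lprod | exact: ncamb_lprod].
by rewrite (ncmul_eq iS IH) ncmul_lprod.
Qed.

Lemma homog_abindex disp (T : finPOrderType disp) (z o : T) rho m :
  homog m (abindex z o rho m).
Proof.
apply: homog_sum => S; apply: homog_scale => u /=; rewrite vset_lprod => /homog_lprod.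
by rewrite size_map size_enum_ord.
Qed.

Theorem mainTheorem6 (n : nat) (gamma : ncs -> qsym) :
  (0 < n)%N ->
  (forall f g, homog n.-1 f -> homog n.-1 g ->
     forall be, gamma (ncadd f g) be = gamma f be + gamma g be) ->
  (forall al, is_comp n al -> forall be, gamma (vcomp al) be = Mbasis al be) ->
  (forall w : ncs, homog n.-1 w ->
     forall m, (Theta n.-1 w)`_m
               = pmul ((1 - 'X) ^+ n * qfact n) (psstar n (gamma w)) m)
  /\
  (forall (disp : Order.disp_t) (T : finPOrderType disp) (z o : T) (rho : T -> nat),
     graded_rank z o rho n ->
     forall m, (Theta n.-1 (abindex z o rho n.-1))`_m
               = pmul ((1 - 'X) ^+ n * qfact n)
                      (psstar n (gamma (abindex z o rho n.-1))) m).
Proof.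
case: n => [//|d] _ gammaD gamma_vcomp.
have Theta_w := Theta_psstar gammaD gamma_vcomp.
split=> [|disp T z o rho _]; first exact: Theta_w.
exact/Theta_w/homog_abindex.
Qed.
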